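(* If the Follow algorithm (described in the context) discovers an edge (observes a successful infection along it) belonging to some $\delta$-edge connected component of $\mathcal G$, then it discovers every edge of that $\delta$-edge connected component.
   Context: A temporal graph $\mathcal G=(V,E,\lambda)$ with lifetime $T_{\max}$ consists of a finite undirected static graph $(V,E)$ and a labeling $\lambda:E\to\{1,\dots,T_{\max}\}$; edge $e$ is present only at time $\lambda(e)$. Infection model with parameter $\delta\in\mathbb N^+$: a seed $(u,t)$ makes $u$ infected at time $t$; otherwise a susceptible node $u$ becomes infected at time $t$ iff some neighbour $v$ infectious at time $t$ has $\lambda(uv)=t$ (exactly one infector recorded if several exist). A node infected at time $t$ is infectious at times $t+1,\dots,t+\delta$ and resistant afterwards. Each round, the Discoverer submits seed infections and observes an infection log (triples $(u,v,t)$: $u$ infected $v$ at time $t$). $\delta$-edge connected components: relate two edges if they share an endpoint and their labels differ by at most $\delta$; the equivalence classes of the transitive closure are the $\delta$-edge connected components. Subroutine Explore$(u,t)$: for each $t'\in\{t-\delta-1,t-1,t\}$, if no round with seed $(u,t')$ was performed, perform a round with the single seed $(u,t')$ and record it; then for each newly observed successful infection along an edge $uv$ at time $t''$, call Explore$(v,t'')$. Algorithm Follow: pick any node $v_0$; for each $i\in[0,\lceil T_{\max}/\delta\rceil]$ perform a round with single seed $(v_0,i\delta)$; for each edge $e=v_0u$ along which an infection succeeds, call Explore$(u,\lambda(e))$. *)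

From mathcomp Require Import all_boot all_order all_algebra.
From Stdlib Require Import Relations.
Set Implicit Arguments. Unset Strict Implicit. Unset Printing Implicit Defensive.
Import Order.TTheory GRing.Theory Num.Theory.
Local Open Scope ring_scope.

Section TemporalGraph.
Variable V : finType.
Variable adj : rel V.
(* labeling: lam u v is the (unique) time at which edge uv is present *)
Variable lam : V -> V -> int.
Variable delta : nat.

Definition temporal_graph (Tmax : nat) : Prop :=
  (forall u v, adj u v = adj v u) /\ (forall u, ~~ adj u u) /\
  (forall u v, adj u v -> lam u v = lam v u) /\
  (forall u v, adj u v -> 1 <= lam u v <= Tmax%:Z).

(* inf u = Some t : u got infected at time t; None : never infected *)
Definition infectious (inf : V -> option int) (v : V) (t : int) : Prop :=
  exists tv, inf v = Some tv /\ tv < t /\ t <= tv + delta%:Z.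

Definition can_infect (inf : V -> option int) (u : V) (t : int) : Prop :=
  exists v, infectious inf v t /\ adj v u /\ lam v u = t.

Definition infection_times (s : V) (t0 : int) (inf : V -> option int) : Prop :=
  inf s = Some t0 /\
  forall u, u != s ->
    (forall t, inf u = Some t <->
       (can_infect inf u t /\ forall t', t' < t -> ~ can_infect inf u t')) /\
    (inf u = None -> forall t, ~ can_infect inf u t).

(* A log is a predicate on triples (u, v, t) : "u infected v at time t". *)
Definition valid_log (s : V) (t0 : int) (L : V -> V -> int -> Prop) : Prop :=
  exists inf, infection_times s t0 inf /\
    (forall u v t, L u v t ->
       [/\ v != s, inf v = Some t, infectious inf u t, adj u v & lam u v = t]) /\
    (forall v t, v != s -> inf v = Some t -> exists! u, L u v t).

(* The Follow algorithm, as the closure of the rounds it performs.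
   obs u t is the log observed for the round with the single seed (u, t)
   (each seed is used in at most one round). *)
Section Follow.
Variable Tmax : nat.
Variable obs : V -> int -> V -> V -> int -> Prop.
Variable v0 : V.

Inductive performed : V -> int -> Prop :=
| perf_init (i : nat) :
    (i <= (Tmax + delta - 1) %/ delta)%N -> performed v0 (i * delta)%N%:Z
| perf_explore (u : V) (t t' : int) :
    explored u t ->
    t' \in [:: t - delta%:Z - 1; t - 1; t] -> performed u t'
with explored : V -> int -> Prop :=
| expl_call (u : V) (s : int) (w : V) (t : int) :
    performed u s -> obs u s u w t -> explored w t.

Definition discovered (a b : V) : Prop :=
  exists u s t, performed u s /\ (obs u s a b t \/ obs u s b a t).
End Follow.

Definition delta_rel (p q : V * V) : Prop :=
  adj p.1 p.2 /\ adj q.1 q.2 /\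
  (p.1 = q.1 \/ p.1 = q.2 \/ p.2 = q.1 \/ p.2 = q.2) /\
  `|lam p.1 p.2 - lam q.1 q.2| <= delta%:Z.

Definition same_delta_component (p q : V * V) : Prop :=
  clos_refl_trans (V * V) delta_rel p q.
End TemporalGraph.

(* Say that a round seeded at (z, s) is productive along the edge zw when
   s < λ(zw) <= s + δ.  By strong induction on λ(zw) - s, Follow calls
   Explore(w, λ(zw)) for every performed round productive along zw: in that
   round w is infected at some t <= λ(zw) through a chain of logged
   infections, each of which triggers Explore by induction; if t < λ(zw), the
   round seeded at (w, t) is productive along wz with a smaller gap, so z is
   explored at λ(zw), and the round seeded at (z, λ(zw) - 1) then observes z
   infecting w.  The three seeds t - δ - 1, t - 1, t of Explore(z, t) make
   some round productive along every edge at z whose label is within δ of t,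
   so exploration spreads along δ-adjacent edges, and an explored edge zw is
   discovered by the round seeded at (z, λ(zw) - 1). *)

From mathcomp Require Import all_boot all_order all_algebra zify.
Set Implicit Arguments. Unset Strict Implicit. Unset Printing Implicit Defensive.
Import GRing.Theory.
Local Open Scope ring_scope.

Section Round.
Variables (V : finType) (adj : rel V) (lam : V -> V -> int) (delta : nat).
Variables (s : V) (t0 : int).

Section InfectionTimes.
Variable inf : V -> option int.
Hypothesis inf_times : infection_times adj lam delta s t0 inf.

Lemma infection_time_gt_seed x tx : x != s -> inf x = Some tx -> t0 < tx.
Proof.
have [inf_s inf_rule] := inf_times.
(* Times are unbounded integers, so induct on the number of nodes infected
   before [tx]: an infector was infected strictly earlier. *)
pose infected_before t := [set y | if inf y is Some ty then ty < t else false].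
move n_def: #|infected_before tx| => n.
elim/ltn_ind: n x tx n_def => n IH x tx n_def xs inf_x.
have [[v [[tv [inf_v [lt_tv _]]] _]] _] := ((inf_rule x xs).1 tx).1 inf_x.
case: (eqVneq v s) => [vs | vs]; first by rewrite vs inf_s in inf_v; case: inf_v => ->.
have before_proper : infected_before tv \proper infected_before tx.
  apply/properP; split; last by exists v; rewrite !inE inf_v; lia.
  by apply/subsetP => y; rewrite !inE; case: (inf y) => // ty; lia.
have lt_card : (#|infected_before tv| < n)%N by rewrite -n_def proper_card.
by have := IH _ lt_card v tv erefl vs inf_v; lia.
Qed.

Lemma infected_by_time u t : u != s -> can_infect adj lam delta inf u t ->
  exists2 tu, inf u = Some tu & tu <= t.
Proof.
move=> us can_t; have [first_time never] := inf_times.2 u us.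
case inf_u: (inf u) => [tu|]; last by case: (never inf_u t).
exists tu => //; case: (boolP (tu <= t)) => // gt_t.
have [_ no_earlier] := (first_time tu).1 inf_u.
by case: (no_earlier t _ can_t); lia.
Qed.

End InfectionTimes.

Variable L : V -> V -> int -> Prop.
Hypothesis L_valid : valid_log adj lam delta s t0 L.

Lemma log_entry_edge x y t : L x y t -> adj x y /\ lam x y = t.
Proof. by case: L_valid => inf [_ [sound _]] /sound[]. Qed.

Lemma log_entry_infector x y t : L x y t -> x != s ->
  exists x' tx, [/\ L x' x tx, t0 < tx, tx < t & t <= tx + delta%:Z].
Proof.
case: L_valid => inf [inf_times [sound complete]].
move=> /sound[_ _ [tx [inf_x [lt_t le_t]]] _ _] xs.
have [x' [Lx' _]] := complete x tx xs inf_x.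
by exists x', tx; split=> //; exact: (infection_time_gt_seed inf_times xs inf_x).
Qed.

Lemma log_reaches_neighbour w : w != s -> adj s w ->
  t0 < lam s w -> lam s w <= t0 + delta%:Z ->
  exists u t, [/\ L u w t, t0 < t & t <= lam s w].
Proof.
case: L_valid => inf [inf_times [_ complete]] ws sw lo hi.
have can_w : can_infect adj lam delta inf w (lam s w).
  by exists s; split=> //; exists t0; split=> //; case: inf_times.
have [tw inf_w le_tw] := infected_by_time inf_times ws can_w.
have [u [Luw _]] := complete w tw ws inf_w.
by exists u, tw; split=> //; exact: (infection_time_gt_seed inf_times ws inf_w).
Qed.

Lemma log_first_step w : (0 < delta)%N -> w != s -> adj s w ->
  lam s w = t0 + 1 -> L s w (lam s w).
Proof.
move=> delta_gt0 ws sw lam_sw.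
have [||u [t [Luw lo hi]]] := log_reaches_neighbour ws sw; [lia | lia |].
have t_eq : t = lam s w by lia.
rewrite t_eq in Luw; case: (eqVneq u s) Luw => [-> // | us Luw].
by have [x' [tx [_ lo' lt_t _]]] := log_entry_infector Luw us; lia.
Qed.

End Round.

Section Follow.
Variables (V : finType) (adj : rel V) (lam : V -> V -> int) (delta Tmax : nat).
Variables (obs : V -> int -> V -> V -> int -> Prop) (v0 : V).
Hypothesis adj_sym : forall u v, adj u v = adj v u.
Hypothesis adj_irrefl : forall u, ~~ adj u u.
Hypothesis lam_sym : forall u v, adj u v -> lam u v = lam v u.
Hypothesis delta_gt0 : (0 < delta)%N.
Hypothesis obs_valid : forall u t, valid_log adj lam delta u t (obs u t).

Local Notation performed := (performed delta Tmax obs v0).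
Local Notation explored := (explored delta Tmax obs v0).

Lemma adj_neq z w : adj z w -> w != z.
Proof. by apply: contraTneq => ->; exact: adj_irrefl. Qed.

Lemma explored_performed u t : explored u t -> performed u t.
Proof. by move/perf_explore; apply; rewrite !inE eqxx !orbT. Qed.

Lemma explored_performed_pred u t : explored u t -> performed u (t - 1).
Proof. by move/perf_explore; apply; rewrite !inE eqxx !orbT. Qed.

Lemma explored_seed_covers z t l : explored z t -> `|l - t| <= delta%:Z ->
  exists2 s, performed z s & s < l <= s + delta%:Z.
Proof.
move=> ex_z near.
have [lt_l | [eq_l | gt_l]] : l < t \/ l = t \/ t < l by lia.
- exists (t - delta%:Z - 1); last lia.
  by apply: perf_explore ex_z _; rewrite !inE eqxx.
- by exists (t - 1); [exact: explored_performed_pred | lia].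
- by exists t; [exact: explored_performed | lia].
Qed.

Lemma obs_first_step z w : adj z w -> obs z (lam z w - 1) z w (lam z w).
Proof.
move=> zw; apply: (log_first_step (obs_valid z _)) => //; last by rewrite subrK.
exact: adj_neq.
Qed.

Lemma explored_swap z w : adj z w -> explored z (lam z w) -> explored w (lam z w).
Proof.
move=> zw /explored_performed_pred perf_z.
exact: expl_call perf_z (obs_first_step zw).
Qed.

Definition explores_within (n : nat) : Prop :=
  forall z s w, performed z s -> adj z w -> s < lam z w <= s + delta%:Z ->
  lam z w - s <= n%:Z -> explored w (lam z w).

Lemma log_explored_within n : (forall m, (m < n)%N -> explores_within m) ->
  forall u s x y t, performed u s -> obs u s x y t -> t - s <= n%:Z -> explored y t.
Proof.
move=> IH u s x y t perf_u; move k_def: (absz (t - s)) => k.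
elim/ltn_ind: k x y t k_def => k IHk x y t k_def Lxy le_n.
case: (eqVneq x u) Lxy => [-> | xu] Lxy; first exact: expl_call perf_u Lxy.
have [x' [tx [Lx' lo lt_t hi]]] := log_entry_infector (obs_valid u s) Lxy xu.
have ex_x : explored x tx by apply: (IHk (absz (tx - s)) _ x' x tx erefl Lx'); lia.
have [xy lam_xy] := log_entry_edge (obs_valid u s) Lxy.
by rewrite -lam_xy; apply: (IH (absz (t - tx))) (explored_performed ex_x) xy _ _; lia.
Qed.

Lemma explores_within_all n : explores_within n.
Proof.
elim/ltn_ind: n => n IH z s w perf_z zw /andP[lo hi] gap.
have [u [t [Luw lo' hi']]] := log_reaches_neighbour (obs_valid z s) (adj_neq zw) zw lo hi.
have ex_w : explored w t by apply: log_explored_within IH _ _ _ _ _ perf_z Luw _; lia.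
have [<- // | lt_t] : t = lam z w \/ t < lam z w by lia.
have lam_wz := lam_sym zw.
apply: (explored_swap zw); rewrite lam_wz.
have wz : adj w z by rewrite adj_sym.
by apply: (IH (absz (lam z w - t))) (explored_performed ex_w) wz _ _; lia.
Qed.

Lemma explored_neighbour z s w : performed z s -> adj z w ->
  s < lam z w <= s + delta%:Z -> explored w (lam z w).
Proof.
move=> perf_z zw window.
by apply: (explores_within_all (n := absz (lam z w - s)) perf_z zw window); lia.
Qed.

Lemma log_explored u s x y t : performed u s -> obs u s x y t -> explored y t.
Proof.
move=> perf_u Lxy; have IH m (_ : (m < absz (t - s))%N) := explores_within_all (n := m).
by apply: (log_explored_within IH perf_u Lxy); lia.
Qed.

Lemma explored_near z t w : explored z t -> adj z w -> `|lam z w - t| <= delta%:Z ->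
  explored w (lam z w).
Proof.
move=> ex_z zw /(explored_seed_covers ex_z)[s perf_z window].
exact: explored_neighbour perf_z zw window.
Qed.

Definition edge_explored (p : V * V) : Prop :=
  explored p.1 (lam p.1 p.2) /\ explored p.2 (lam p.1 p.2).

Lemma edge_explored_at_endpoint z t x y : adj x y -> (z = x \/ z = y) ->
  explored z t -> `|lam x y - t| <= delta%:Z -> edge_explored (x, y).
Proof.
move=> xy z_end ex_z near; have yx : adj y x by rewrite adj_sym.
have lam_yx := lam_sym xy.
case: z_end => z_eq; subst z.
- have ex_y := explored_near ex_z xy near.
  by split=> //; rewrite lam_yx in ex_y *; exact: (explored_swap yx ex_y).
- have near_yx : `|lam y x - t| <= delta%:Z by rewrite -lam_yx.
  have ex_x := explored_near ex_z yx near_yx.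
  by rewrite -lam_yx in ex_x; split=> //; exact: (explored_swap xy ex_x).
Qed.

Lemma edge_explored_step p q : delta_rel adj lam delta p q ->
  edge_explored p -> edge_explored q.
Proof.
case: p q => [p1 p2] [q1 q2] [/= _ [q12 [shared close]]] [ex1 ex2].
have near : `|lam q1 q2 - lam p1 p2| <= delta%:Z by lia.
case: shared => [e | [e | [e | e]]].
- exact: (edge_explored_at_endpoint q12 (or_introl e) ex1 near).
- exact: (edge_explored_at_endpoint q12 (or_intror e) ex1 near).
- exact: (edge_explored_at_endpoint q12 (or_introl e) ex2 near).
- exact: (edge_explored_at_endpoint q12 (or_intror e) ex2 near).
Qed.

Lemma edge_explored_component p q : same_delta_component adj lam delta p q ->
  edge_explored p -> edge_explored q.
Proof.
elim=> [{}p {}q /edge_explored_step // | // | p' q' r' _ IHpq _ IHqr /IHpq/IHqr //].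
Qed.

Lemma discovered_edge_explored a b :
  discovered delta Tmax obs v0 a b -> edge_explored (a, b).
Proof.
case=> u [s [t [perf_u [Lab | Lba]]]].
- have [ab lam_ab] := log_entry_edge (obs_valid u s) Lab.
  apply: (edge_explored_at_endpoint ab (or_intror erefl) (log_explored perf_u Lab)).
  by rewrite lam_ab subrr.
- have [ba lam_ba] := log_entry_edge (obs_valid u s) Lba.
  have ab : adj a b by rewrite adj_sym.
  apply: (edge_explored_at_endpoint ab (or_introl erefl) (log_explored perf_u Lba)).
  by rewrite (lam_sym ab) lam_ba subrr.
Qed.

Lemma edge_explored_discovered c d : adj c d -> edge_explored (c, d) ->
  discovered delta Tmax obs v0 c d.
Proof.
move=> cd [/explored_performed_pred perf_c _].
by exists c, (lam c d - 1), (lam c d); split; last by left; exact: obs_first_step.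
Qed.

End Follow.

Theorem mainTheorem9 (V : finType) (adj : rel V) (lam : V -> V -> int)
  (Tmax delta : nat) (obs : V -> int -> V -> V -> int -> Prop) (v0 : V) :
  temporal_graph adj lam Tmax ->
  (0 < delta)%N ->
  (forall u t, valid_log adj lam delta u t (obs u t)) ->
  forall a b c d : V, adj a b -> adj c d ->
  same_delta_component adj lam delta (a, b) (c, d) ->
  discovered delta Tmax obs v0 a b ->
  discovered delta Tmax obs v0 c d.
Proof.
move=> [adj_sym [adj_irrefl [lam_sym _]]] delta_gt0 obs_valid a b c d _ cd comp disc.
apply: edge_explored_discovered => //.
apply: edge_explored_component comp _ => //.
exact: discovered_edge_explored.
Qed.
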